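(* Let $a,b\in \mathcal{A}^{\mathrm{gcEP}}$, $\lambda,\mu\in \mathbb{C}^*$. If $ab=\lambda ba$, $a^*b=\mu ba^*$, then $ab\in \mathcal{A}^{\mathrm{gcEP}}$. In this case, $(ab)^{\mathrm{gcEP}}=b^{\mathrm{gcEP}}a^{\mathrm{gcEP}}=\lambda^{-1}a^{\mathrm{gcEP}}b^{\mathrm{gcEP}}$.
   Context: $\mathcal{A}$ is a complex Banach *-algebra with identity, and $\mathbb{C}^*$ is the set of nonzero complex numbers. An element $a$ has a generalized core-EP inverse if there is $x\in\mathcal{A}$ with $x=ax^2$, $(ax)^*=ax$, $\lim_{n\to\infty}\|a^n-xa^{n+1}\|^{1/n}=0$; such $x$ is unique, denoted $a^{\mathrm{gcEP}}$, and $\mathcal{A}^{\mathrm{gcEP}}$ is the set of such $a$. *)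

From HB Require Import structures.
From mathcomp Require Import all_boot all_order all_algebra.
From mathcomp Require Import all_classical all_reals all_analysis.
From mathcomp Require Import complex.
Set Implicit Arguments. Unset Strict Implicit. Unset Printing Implicit Defensive.
Import Order.TTheory GRing.Theory Num.Theory.
Import numFieldNormedType.Exports.
Local Open Scope classical_set_scope.
Local Open Scope ring_scope.

Record banach_star_algebra (R : realType) (A : algType R[i])
    (star : A -> A) (nrm : A -> R) : Prop := BanachStarAlgebra {
  star_add : forall x y : A, star (x + y) = star x + star y;
  star_scale : forall (c : R[i]) (x : A), star (c *: x) = conjc c *: star x;
  star_mul : forall x y : A, star (x * y) = star y * star x;
  star_invol : forall x : A, star (star x) = x;
  nrm_ge0 : forall x : A, 0 <= nrm x;
  nrm_eq0 : forall x : A, nrm x = 0 -> x = 0;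
  nrm_triangle : forall x y : A, nrm (x + y) <= nrm x + nrm y;
  nrm_scale : forall (c : R[i]) (x : A), nrm (c *: x) = Normc.normc c * nrm x;
  nrm_submul : forall x y : A, nrm (x * y) <= nrm x * nrm y;
  nrm_complete : forall u : nat -> A,
    (forall e : R, 0 < e -> exists N : nat, forall m n : nat,
        (N <= m)%N -> (N <= n)%N -> nrm (u m - u n) < e) ->
    exists l : A, forall e : R, 0 < e -> exists N : nat, forall n : nat,
        (N <= n)%N -> nrm (u n - l) < e
}.

Definition is_gcEP_inverse (R : realType) (A : algType R[i])
    (star : A -> A) (nrm : A -> R) (a x : A) : Prop :=
  [/\ x = a * x ^+ 2,
      star (a * x) = a * x &
      (fun n : nat => powR (nrm (a ^+ n - x * a ^+ n.+1)) (n%:R^-1)) @ \oo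
        --> (0 : R)].

Definition has_gcEP (R : realType) (A : algType R[i])
    (star : A -> A) (nrm : A -> R) (a : A) : Prop :=
  exists x : A, is_gcEP_inverse star nrm a x.

From mathcomp Require Import all_boot all_order all_algebra.
From mathcomp Require Import all_classical all_reals all_analysis.
From mathcomp Require Import complex lra.

Set Implicit Arguments.
Unset Strict Implicit.
Unset Printing Implicit Defensive.

Import Order.TTheory GRing.Theory Num.Theory.
Import numFieldNormedType.Exports.
Local Open Scope classical_set_scope.
Local Open Scope ring_scope.

(* The limit axiom of a gcEP inverse x of a says that the residuals
   (1 - x a) a^n are super-exponentially small; hence any fixed element
   bounded by C M^n times them is 0.  Feeding suitable identities into this
   turns analysis into algebra: a x is a self-adjoint idempotent, and an
   element d with d a = s a d and d^* a = t a d^* commutes with a x and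
   satisfies x d = s d x.  Applied to b, a^* and y, this gives
   y x = lambda^-1 x y and writes ab (y x) = (b y)(a x) as a product of
   commuting self-adjoint idempotents.  The residual of y x is
   (1 - (y b)(x a)) (ab)^n, which splits into residuals of a and b once
   (ab)^n is written as a scalar of modulus at most 1 times a^n b^n, or
   times b^n a^n.  Uniqueness of gcEP inverses finishes the proof. *)

Section SuperexpSmall.
Variable R : realType.
Implicit Types (u v : nat -> R) (c d : R).

Definition superexp_small u := forall d, 0 < d -> \forall n \near \oo, u n <= d ^+ n.

Lemma superexp_smallP u : (forall n, 0 <= u n) ->
  (fun n => powR (u n) n%:R^-1) @ \oo --> 0 <-> superexp_small u.
Proof.
move=> u_ge0; split.
- move=> /cvgrPdist_le u_cvg d d_gt0; near=> n.
  have n_gt0 : (0 < n)%N by near: n; exact: nbhs_infty_gt.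
  have n_neq0 : n%:R != 0 :> R by rewrite pnatr_eq0 -lt0n.
  have : `|0 - powR (u n) n%:R^-1| <= d by near: n; exact: u_cvg.
  rewrite sub0r normrN ger0_norm ?powR_ge0 // => root_le.
  have un_eq : powR (u n) n%:R^-1 ^+ n = u n.
    by rewrite -powR_mulrn ?powR_ge0 // -powRrM mulVf // powRr1.
  by rewrite -un_eq lerXn2r // nnegrE ?powR_ge0 // ltW.
- move=> u_small; apply/cvgrPdist_le => e e_gt0; near=> n.
  have n_gt0 : (0 < n)%N by near: n; exact: nbhs_infty_gt.
  have n_neq0 : n%:R != 0 :> R by rewrite pnatr_eq0 -lt0n.
  rewrite sub0r normrN ger0_norm ?powR_ge0 //.
  have une : u n <= e ^+ n by near: n; exact: u_small.
  have e_ge0 := ltW e_gt0.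
  apply: (le_trans (ge0_ler_powR _ _ _ une)); rewrite ?invr_ge0 ?nnegrE ?exprn_ge0 //.
  by rewrite -powR_mulrn // -powRrM mulfV // powRr1.
Unshelve. all: end_near.
Qed.

Lemma superexp_small_le u v : (forall n, u n <= v n) ->
  superexp_small v -> superexp_small u.
Proof.
move=> le_uv v_small d d_gt0; near=> n.
by apply: le_trans (le_uv n) _; near: n; exact: v_small.
Unshelve. all: end_near.
Qed.

Lemma superexp_small_scale u C : (forall d, 0 < d -> \forall n \near \oo, u n <= C * d ^+ n) ->
  superexp_small u.
Proof.
move=> u_le d d_gt0; have d2_gt0 : 0 < d / 2 by rewrite divr_gt0.
near=> n; apply: le_trans (_ : C * (d / 2) ^+ n <= _).
  by near: n; exact: u_le.
rewrite expr_div_n mulrCA ler_piMr ?exprn_ge0 ?(ltW d_gt0) //.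
rewrite ler_pdivrMr ?exprn_gt0 // mul1r.
have Cn : C <= n%:R by near: n; exact: nbhs_infty_ger.
by apply: le_trans Cn _; rewrite -natrX ler_nat ltnW // ltn_expl.
Unshelve. all: end_near.
Qed.

Lemma superexp_smallD u v : superexp_small u -> superexp_small v ->
  superexp_small (fun n => u n + v n).
Proof.
move=> u_small v_small; apply: (@superexp_small_scale _ 2) => d d_gt0.
near=> n; rewrite mulr2n mulrDl mul1r lerD //.
  by near: n; exact: u_small.
by near: n; exact: v_small.
Unshelve. all: end_near.
Qed.

Lemma superexp_small_geo u C M : 0 <= C -> 0 <= M -> superexp_small u ->
  superexp_small (fun n => C * M ^+ n * u n).
Proof.
move=> C_ge0 M_ge0 u_small; apply: (@superexp_small_scale _ C) => d d_gt0.
have M1_gt0 : 0 < M + 1 by rewrite ltr_wpDl.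
near=> n; rewrite -mulrA ler_wpM2l //.
have : u n <= (d / (M + 1)) ^+ n by near: n; apply: u_small; rewrite divr_gt0.
move=> /(ler_wpM2l (exprn_ge0 n M_ge0)) /le_trans; apply.
have Md_le : M * (d / (M + 1)) <= d.
  by rewrite mulrCA ler_piMr ?(ltW d_gt0) // ler_pdivrMr // mul1r lerDl.
by rewrite -exprMn lerXn2r // nnegrE ?(ltW d_gt0) // mulr_ge0 // divr_ge0 // ltW.
Unshelve. all: end_near.
Qed.

Lemma superexp_small_cst c : 0 <= c -> superexp_small (fun=> c) -> c = 0.
Proof.
rewrite le_eqVlt => /predU1P[<- //|c_gt0] c_small.
have c1_gt0 : 0 < c + 1 by rewrite ltr_wpDl // ltW.
have d_gt0 : 0 < c / (c + 1) by rewrite divr_gt0.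
have d_le1 : c / (c + 1) <= 1 by rewrite ler_pdivrMr // mul1r lerDl ltW.
have d_lt_c : c / (c + 1) < c by rewrite ltr_pdivrMr //; nra.
have [N _ /(_ N.+1 (leqnSn N))] := c_small _ d_gt0.
rewrite exprS => /le_trans/(_ (ler_piMr (ltW d_gt0) (exprn_ile1 N (ltW d_gt0) d_le1))).
by rewrite leNgt d_lt_c.
Qed.
End SuperexpSmall.

Section SkewCommutation.
Variables (K : comNzRingType) (A : algType K) (c d : A) (k : K).
Hypothesis dc : d * c = k *: (c * d).

Lemma skew_commXr n : d * c ^+ n = k ^+ n *: (c ^+ n * d).
Proof.
elim: n => [|n IHn]; first by rewrite !expr0 scale1r mul1r mulr1.
rewrite exprSr mulrA IHn -scalerAl -(mulrA _ d c) dc -scalerAr scalerA.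
by rewrite mulrA -!exprSr.
Qed.

Lemma skew_commXl n : d ^+ n * c = k ^+ n *: (c * d ^+ n).
Proof.
elim: n => [|n IHn]; first by rewrite !expr0 scale1r mul1r mulr1.
rewrite exprS -mulrA IHn -scalerAr (mulrA d c) dc -scalerAl scalerA.
by rewrite -mulrA -exprS -exprSr.
Qed.

Lemma skew_exprMn n : (c * d) ^+ n = k ^+ 'C(n, 2) *: (c ^+ n * d ^+ n).
Proof.
elim: n => [|n IHn]; first by rewrite !expr0 scale1r mulr1.
rewrite exprSr IHn -scalerAl mulrA -(mulrA _ (d ^+ n)) skew_commXl.
by rewrite -scalerAr -scalerAl scalerA -exprD binS bin1 addnC mulrA -exprSr -mulrA -exprSr.
Qed.
End SkewCommutation.

Lemma normc_ge0 (R : rcfType) (s : R[i]) : 0 <= Normc.normc s.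
Proof. by case: s => a b; apply: sqrtr_ge0. Qed.

Lemma normcX (R : rcfType) (s : R[i]) n : Normc.normc (s ^+ n) = Normc.normc s ^+ n.
Proof.
elim: n => [|n IHn]; first by rewrite !expr0 Normc.normc1.
by rewrite !exprS Normc.normcM IHn.
Qed.

Section SuperexpNull.
Variables (R : realType) (A : algType R[i]) (star : A -> A) (nrm : A -> R).
Hypothesis HA : banach_star_algebra star nrm.
Implicit Types (x y p q : A) (e f : nat -> A) (s : R[i]).

Let nrm_ge0 x : 0 <= nrm x := nrm_ge0 HA x.

Lemma nrmN x : nrm (- x) = nrm x.
Proof. by rewrite -scaleN1r (nrm_scale HA) normcN Normc.normc1 mul1r. Qed.

Lemma nrmX x n : nrm (x ^+ n) <= nrm 1 * nrm x ^+ n.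
Proof.
elim: n => [|n IHn]; first by rewrite !expr0 mulr1.
rewrite exprS exprS mulrCA; apply: le_trans (nrm_submul HA _ _) _.
by rewrite ler_wpM2l.
Qed.

Definition superexp_null e := superexp_small (fun n => nrm (e n)).

Lemma superexp_null_geo e f C M : 0 <= C -> 0 <= M ->
  (forall n, nrm (f n) <= C * M ^+ n * nrm (e n)) ->
  superexp_null e -> superexp_null f.
Proof.
by move=> C_ge0 M_ge0 le_fe /(superexp_small_geo C_ge0 M_ge0); apply: superexp_small_le.
Qed.

Lemma superexp_null_le e f : (forall n, nrm (f n) <= nrm (e n)) ->
  superexp_null e -> superexp_null f.
Proof.
by move=> le_fe; apply: (@superexp_null_geo _ _ 1 1) => // n; rewrite expr1n !mul1r.
Qed.

Lemma superexp_nullD e f : superexp_null e -> superexp_null f ->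
  superexp_null (fun n => e n + f n).
Proof.
move=> e_null f_null; apply: superexp_small_le (superexp_smallD e_null f_null).
by move=> n; apply: (nrm_triangle HA).
Qed.

Lemma superexp_nullN e : superexp_null e -> superexp_null (fun n => - e n).
Proof. by apply: superexp_null_le => n; rewrite nrmN. Qed.

Lemma superexp_nullMl p e : superexp_null e -> superexp_null (fun n => p * e n).
Proof.
apply: (@superexp_null_geo _ _ (nrm p) 1) => // n.
by rewrite expr1n mulr1 (nrm_submul HA).
Qed.

Lemma superexp_nullMr p e : superexp_null e -> superexp_null (fun n => e n * p).
Proof.
apply: (@superexp_null_geo _ _ (nrm p) 1) => // n.
by rewrite expr1n mulr1 mulrC (nrm_submul HA).
Qed.

Lemma superexp_nullXM q e : superexp_null e -> superexp_null (fun n => q ^+ n * e n).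
Proof.
apply: (@superexp_null_geo _ _ (nrm 1) (nrm q)) => // n.
by apply: le_trans (nrm_submul HA _ _) _; rewrite ler_wpM2r ?nrmX.
Qed.

Lemma superexp_nullMX q e : superexp_null e -> superexp_null (fun n => e n * q ^+ n).
Proof.
apply: (@superexp_null_geo _ _ (nrm 1) (nrm q)) => // n.
by apply: le_trans (nrm_submul HA _ _) _; rewrite mulrC ler_wpM2r ?nrmX.
Qed.

Lemma superexp_nullZX s e : superexp_null e -> superexp_null (fun n => s ^+ n *: e n).
Proof.
apply: (@superexp_null_geo _ _ 1 (Normc.normc s)); rewrite ?normc_ge0 // => n.
by rewrite (nrm_scale HA) normcX mul1r.
Qed.

Lemma superexp_null_eq x y e : superexp_null e -> (forall n, x - y = e n) -> x = y.
Proof.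
move=> e_null xy_e; apply/subr0_eq/(nrm_eq0 HA)/superexp_small_cst => //.
by apply: superexp_null_le e_null => n; rewrite (xy_e n).
Qed.

Lemma superexp_null_skew_mul c d u v k : Normc.normc k <= 1 ->
  d * c = k *: (c * d) -> v * c = c * v ->
  superexp_null (fun n => (1 - u) * c ^+ n) ->
  superexp_null (fun n => (1 - v) * d ^+ n) ->
  superexp_null (fun n => (1 - v * u) * (c * d) ^+ n).
Proof.
move=> k_le1 dc vc u_null v_null.
apply: superexp_null_le (superexp_nullD (superexp_nullXM c v_null)
  (superexp_nullMX d (superexp_nullMl v u_null))) => n.
rewrite (skew_exprMn dc) -scalerAr (nrm_scale HA) normcX.
apply: le_trans (ler_piMl (nrm_ge0 _) (exprn_ile1 _ (normc_ge0 k) k_le1)) _.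
have v_cX : (1 - v) * c ^+ n = c ^+ n * (1 - v).
  by rewrite mulrBl mulrBr mul1r mulr1 (commrX n vc).
have -> : 1 - v * u = (1 - v) + v * (1 - u) by rewrite mulrBr mulr1 addrA subrK.
by rewrite mulrDl mulrA v_cX -!mulrA.
Qed.

End SuperexpNull.

Section GcEPInverse.
Variables (R : realType) (A : algType R[i]) (star : A -> A) (nrm : A -> R).
Hypothesis HA : banach_star_algebra star nrm.
Variables (c w : A).
Hypothesis w_inv : is_gcEP_inverse star nrm c w.

Lemma gcEP_mulX n : c ^+ n * w ^+ n.+1 = w.
Proof.
have [w_eq _ _] := w_inv.
elim: n => [|n IHn]; first by rewrite mul1r.
have cww : c * (w * w) = w by rewrite -expr2 -w_eq.
have -> : w ^+ n.+2 = w * w * w ^+ n by rewrite -mulrA -!exprS.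
by rewrite exprSr -mulrA (mulrA c) cww -exprS.
Qed.

Lemma gcEP_projX n : c ^+ n.+1 * w ^+ n.+1 = c * w.
Proof. by rewrite exprS -mulrA gcEP_mulX. Qed.

Lemma gcEP_proj_star : star (c * w) = c * w.
Proof. by case: w_inv. Qed.

Lemma gcEP_proj_inv : c * w * w = w.
Proof. by have [w_eq _ _] := w_inv; rewrite -mulrA -expr2 -w_eq. Qed.

Lemma gcEP_limitP :
  (fun n => powR (nrm (c ^+ n - w * c ^+ n.+1)) n%:R^-1) @ \oo --> (0 : R) <->
  superexp_null nrm (fun n => (1 - w * c) * c ^+ n).
Proof.
have -> : (fun n => (1 - w * c) * c ^+ n) = (fun n => c ^+ n - w * c ^+ n.+1).
  by apply/funext => n; rewrite mulrBl mul1r -mulrA -exprS.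
exact: superexp_smallP (fun n => nrm_ge0 HA _).
Qed.

Lemma gcEP_residual_null : superexp_null nrm (fun n => (1 - w * c) * c ^+ n).
Proof. by have [_ _ /gcEP_limitP] := w_inv. Qed.

Lemma gcEP_inv_proj : w * (c * w) = w.
Proof.
apply/esym/(superexp_null_eq HA (superexp_nullMX HA w
  (superexp_nullMr HA w gcEP_residual_null))) => n.
by rewrite -!mulrA -exprS gcEP_mulX mulrBl mul1r mulrA.
Qed.

Lemma gcEP_invc_proj : w * c * (c * w) = c * w.
Proof.
apply/esym/(superexp_null_eq HA (superexp_nullMX HA w
  (superexp_nullMr HA (c * w) gcEP_residual_null))) => n.
by rewrite -!mulrA (mulrA (c ^+ n)) -exprSr -exprS gcEP_projX mulrBl mul1r !mulrA.
Qed.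

Lemma gcEP_coresidual_null : superexp_null nrm (fun n => (1 - c * w) * c ^+ n.+1).
Proof.
apply: superexp_null_le (superexp_nullMl HA c gcEP_residual_null) => n.
suff -> : (1 - c * w) * c ^+ n.+1 = c * ((1 - w * c) * c ^+ n) by [].
by rewrite !mulrBl !mul1r mulrBr exprS !mulrA.
Qed.

Lemma gcEP_skew_proj_invariant d s : d * c = s *: (c * d) ->
  c * w * d * (c * w) = d * (c * w).
Proof.
(* d c^(n+1) = s^(n+1) c^(n+1) d, and (1 - c w) c^(n+1) is negligible. *)
move=> dc; apply/esym/(superexp_null_eq HA (superexp_nullZX HA s
  (superexp_nullMX HA w (superexp_nullMr HA (s *: d * w) gcEP_coresidual_null)))) => n.
have dp : d * (c * w) = s ^+ n.+1 *: (c ^+ n.+1 * d * w ^+ n.+1).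
  by rewrite -(gcEP_projX n) mulrA (skew_commXr dc) -scalerAl.
rewrite -[c * w * d * _]mulrA -{1}[d * _]mul1r -mulrBl dp -scalerAr.
rewrite -scalerAl -scalerAr -scalerAl exprSr -scalerA [w ^+ n.+1]exprS.
by rewrite !mulrA.
Qed.

Lemma gcEP_proj_comm d s t : d * c = s *: (c * d) -> star d * c = t *: (c * star d) ->
  d * (c * w) = c * w * d.
Proof.
move=> dc dstar_c; have := congr1 star (gcEP_skew_proj_invariant dstar_c).
have := gcEP_skew_proj_invariant dc; have := gcEP_proj_star.
set p := c * w => p_star proj_d.
rewrite (star_mul HA _ p) (star_mul HA p) (star_mul HA (star d) p) (star_invol HA) p_star => d_proj.
by rewrite -proj_d -mulrA d_proj.
Qed.

Lemma gcEP_skew_comm d s : d * c = s *: (c * d) -> d * (c * w) = c * w * d ->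
  w * d = s *: (d * w).
Proof.
move: gcEP_proj_inv gcEP_inv_proj gcEP_invc_proj => + + + dc.
set p := c * w => p_w w_p wc_p proj_d.
have dw : d * w = w * c * d * w.
  rewrite -{1}p_w mulrA proj_d -{1}wc_p -(mulrA (w * c)) -proj_d.
  by rewrite -mulrA -(mulrA d p w) p_w mulrA.
rewrite -{1}w_p -mulrA -proj_d /p !mulrA -(mulrA w d) dc.
by rewrite -scalerAr -scalerAl !mulrA -dw.
Qed.
End GcEPInverse.

Section GcEPUnique.
Variables (R : realType) (A : algType R[i]) (star : A -> A) (nrm : A -> R).
Hypothesis HA : banach_star_algebra star nrm.

Lemma gcEP_proj_absorb c u v : is_gcEP_inverse star nrm c u ->
  is_gcEP_inverse star nrm c v -> c * v * (c * u) = c * u.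
Proof.
move=> u_inv v_inv; apply/esym/(superexp_null_eq HA (superexp_nullMX HA u
  (superexp_nullMr HA u (gcEP_coresidual_null HA v_inv)))) => n.
by rewrite -!mulrA -exprS (gcEP_projX u_inv) mulrBl mul1r mulrA.
Qed.

Lemma gcEP_inverse_unique c u v : is_gcEP_inverse star nrm c u ->
  is_gcEP_inverse star nrm c v -> u = v.
Proof.
move=> u_inv v_inv.
have proj_eq : c * u = c * v.
  rewrite -(gcEP_proj_star u_inv) -(gcEP_proj_absorb u_inv v_inv) (star_mul HA).
  by rewrite (gcEP_proj_star u_inv) (gcEP_proj_star v_inv) (gcEP_proj_absorb v_inv u_inv).
have res_null := superexp_nullD HA (gcEP_residual_null HA v_inv)
  (superexp_nullN HA (gcEP_residual_null HA u_inv)).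
apply: (superexp_null_eq HA (superexp_nullMX HA v (superexp_nullMr HA v res_null))) => n.
rewrite -mulrA -exprS mulrBl -!mulrA (gcEP_mulX v_inv) !mulrBl !mul1r -!mulrA.
rewrite (gcEP_inv_proj HA v_inv) -proj_eq (gcEP_inv_proj HA u_inv).
by rewrite subrr sub0r opprB.
Qed.
End GcEPUnique.

Section SkewCommutingFactors.
Variables (R : realType) (A : algType R[i]) (star : A -> A) (nrm : A -> R).
Hypothesis HA : banach_star_algebra star nrm.
Variables (a b x y : A) (l mu : R[i]).
Hypotheses (x_inv : is_gcEP_inverse star nrm a x) (y_inv : is_gcEP_inverse star nrm b y).
Hypotheses (l_neq0 : l != 0) (mu_neq0 : mu != 0).
Hypotheses (ab : a * b = l *: (b * a)) (astar_b : star a * b = mu *: (b * star a)).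

Let ba_skew : b * a = l^-1 *: (a * b).
Proof. by rewrite ab scalerK. Qed.

Let bstar_a_skew : star b * a = conjc mu *: (a * star b).
Proof.
have := congr1 star astar_b.
by rewrite (star_scale HA) !(star_mul HA) (star_invol HA).
Qed.

Let xb_skew : x * b = l^-1 *: (b * x).
Proof.
exact: (gcEP_skew_comm HA x_inv ba_skew (gcEP_proj_comm HA x_inv ba_skew bstar_a_skew)).
Qed.

Let a_comm_by : a * (b * y) = b * y * a.
Proof. exact: (gcEP_proj_comm HA y_inv ab astar_b). Qed.

Let ya_skew : y * a = l *: (a * y).
Proof. exact: (gcEP_skew_comm HA y_inv ab a_comm_by). Qed.

Let ystar_a_skew : star y * a = (conjc mu)^-1 *: (a * star y).
Proof.
have astar_comm_by : star a * (b * y) = b * y * star a.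
  have := congr1 star a_comm_by.
  by rewrite (star_mul HA a) (star_mul HA _ a) (gcEP_proj_star y_inv) => /esym.
have := congr1 star (gcEP_skew_comm HA y_inv astar_b astar_comm_by).
rewrite (star_scale HA) !(star_mul HA) (star_invol HA) => ->.
by rewrite scalerK ?conjc_eq0.
Qed.

Let y_comm_ax : y * (a * x) = a * x * y.
Proof. exact: (gcEP_proj_comm HA x_inv ya_skew ystar_a_skew). Qed.

Lemma xy_skew : x * y = l *: (y * x).
Proof. exact: (gcEP_skew_comm HA x_inv ya_skew y_comm_ax). Qed.

Let b_comm_xa : b * (x * a) = x * a * b.
Proof.
rewrite -[RHS]mulrA ab -scalerAr (mulrA x b) xb_skew -scalerAl scalerA.
by rewrite mulfV // scale1r mulrA.
Qed.

Let a_comm_yb : a * (y * b) = y * b * a.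
Proof.
rewrite -[RHS]mulrA ba_skew -scalerAr (mulrA y a) ya_skew -scalerAl scalerA.
by rewrite mulVf // scale1r mulrA.
Qed.

Let xa_comm_yb : x * a * (y * b) = y * b * (x * a).
Proof.
rewrite -mulrA a_comm_yb !mulrA xy_skew -!scalerAl -(mulrA y x b) xb_skew.
by rewrite -scalerAr -scalerAl scalerA mulfV // scale1r !mulrA.
Qed.

Let mul_proj : a * b * (y * x) = b * y * (a * x).
Proof. by rewrite -mulrA (mulrA b) mulrA a_comm_by -mulrA. Qed.

Let ax_comm_by : a * x * (b * y) = b * y * (a * x).
Proof.
rewrite -mulrA (mulrA x b) xb_skew -scalerAl -scalerAr -(mulrA b x y) xy_skew.
by rewrite -!scalerAr scalerA mulVf // scale1r mulrA mul_proj.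
Qed.

Let mul_inv_eq : y * x = a * b * (y * x) ^+ 2.
Proof.
rewrite expr2 mulrA mul_proj -mulrA (mulrA (a * x)) -y_comm_ax !mulrA.
by rewrite (gcEP_proj_inv y_inv) -(mulrA y a x) -mulrA (gcEP_proj_inv x_inv).
Qed.

Let mul_proj_star : star (a * b * (y * x)) = a * b * (y * x).
Proof.
by rewrite mul_proj (star_mul HA) (gcEP_proj_star x_inv) (gcEP_proj_star y_inv) ax_comm_by.
Qed.

Let mul_residual_null :
  superexp_null nrm (fun n => (1 - y * x * (a * b)) * (a * b) ^+ n).
Proof.
have -> : y * x * (a * b) = y * b * (x * a).
  by rewrite -mulrA (mulrA x a b) -b_comm_xa mulrA.
(* (ab)^n = l^-'C(n, 2) a^n b^n = l^n l^'C(n, 2) b^n a^n: order the factors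
   so that the scalar has modulus at most 1. *)
have [l_ge1|l_lt1] := leP 1 (Normc.normc l).
  have l_inv_le1 : Normc.normc l^-1 <= 1.
    by rewrite Normc.normcV invf_le1 // (lt_le_trans ltr01).
  exact: (superexp_null_skew_mul HA l_inv_le1 ba_skew (esym a_comm_yb)
    (gcEP_residual_null HA x_inv) (gcEP_residual_null HA y_inv)).
have := superexp_null_skew_mul HA (ltW l_lt1) ab (esym b_comm_xa)
  (gcEP_residual_null HA y_inv) (gcEP_residual_null HA x_inv).
move=> /(superexp_nullZX HA l); apply: superexp_null_le => n.
by rewrite ab exprZn -scalerAr xa_comm_yb.
Qed.

Lemma gcEP_inverse_mul : is_gcEP_inverse star nrm (a * b) (y * x).
Proof.
split; [exact: mul_inv_eq | exact: mul_proj_star |].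
exact/(gcEP_limitP HA)/mul_residual_null.
Qed.

End SkewCommutingFactors.

Theorem theorem3p3 (R : realType) (A : algType R[i]) (star : A -> A)
    (nrm : A -> R) (HA : banach_star_algebra star nrm)
    (a b : A) (lambda mu : R[i]) :
  has_gcEP star nrm a -> has_gcEP star nrm b ->
  lambda != 0 -> mu != 0 ->
  a * b = lambda *: (b * a) -> star a * b = mu *: (b * star a) ->
  has_gcEP star nrm (a * b) /\
  (forall x y z : A,
     is_gcEP_inverse star nrm a x -> is_gcEP_inverse star nrm b y ->
     is_gcEP_inverse star nrm (a * b) z ->
     z = y * x /\ y * x = lambda^-1 *: (x * y)).
Proof.
move=> [x x_inv] [y y_inv] l_neq0 mu_neq0 ab astar_b.
have yx_inv := gcEP_inverse_mul HA x_inv y_inv l_neq0 mu_neq0 ab astar_b.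
split=> [|x' y' z x'_inv y'_inv z_inv]; first by exists (y * x).
rewrite (gcEP_inverse_unique HA x'_inv x_inv) (gcEP_inverse_unique HA y'_inv y_inv).
split; first exact: (gcEP_inverse_unique HA z_inv yx_inv).
by rewrite (xy_skew HA x_inv y_inv mu_neq0 ab astar_b) scalerK.
Qed.
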